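(* Let $\Phi=(V,\mathcal C)$ be a $(k,d,s)$-CNF formula and $c^*$ a clause with $|\mathrm{vbl}(c^* )|=k$. Let $p\ge1$ satisfy $\frac kp+\frac{ps}2\le k$, and let $\widetilde{\mathcal C}=\{c\in\mathcal C: |\mathrm{vbl}(c)\cap\mathrm{vbl}(c^* )|\ge\frac kp+\frac{ps}2\}$. Then $|\widetilde{\mathcal C}|\le p$.
   Context: A $(k,d,s)$-CNF formula is a CNF formula in which every clause contains exactly $k$ distinct variables, every variable appears in at most $d$ clauses, and any two distinct clauses share at most $s$ variables. $\mathrm{vbl}(c)$ denotes the set of variables of clause $c$. *)

From HB Require Import structures.
From mathcomp Require Import all_boot all_order all_algebra.
Set Implicit Arguments. Unset Strict Implicit. Unset Printing Implicit Defensive.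
Import Order.TTheory GRing.Theory Num.Theory.

(* A literal over the variable set V is a pair (x, b): the variable x,
   positive if b = true and negated if b = false. *)
Definition literal (V : finType) := (V * bool)%type.
Definition clause (V : finType) := {set literal V}.

Definition vbl (V : finType) (c : clause V) : {set V} :=
  [set l.1 | l in c].

Definition kds_CNF (V : finType) (C : {set clause V}) (k d s : nat) : Prop :=
  [/\ (forall c, c \in C -> #|c| = k /\ #|vbl c| = k),
      (forall x : V, #|[set c in C | x \in vbl c]| <= d)%N &
      (forall c1 c2, c1 \in C -> c2 \in C -> c1 != c2 ->
         #|vbl c1 :&: vbl c2| <= s)%N].

From mathcomp Require Import all_boot all_order all_algebra.
From mathcomp Require Import zify lra.
Import Order.TTheory GRing.Theory Num.Theory.

(* If n distinct clauses of C each meet vbl(cstar) in at least t variables,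
   the Bonferroni inequality bounds the sum of these overlaps by
   |vbl(cstar)| + s C(n,2): their union lies in vbl(cstar) and any two of them
   share at most s variables.  Hence n t <= k + s n (n - 1) / 2.  For
   n = floor(p) + 1 this fails when t = k/p + p s/2: n k/p exceeds k because
   n > p, and n p s/2 pays for s n (n - 1)/2 because n - 1 <= p.  So fewer than
   floor(p) + 1 clauses reach the threshold. *)

Set Implicit Arguments.
Unset Strict Implicit.
Unset Printing Implicit Defensive.

Section Bonferroni.

Variables (T : finType) (I : eqType) (A : I -> {set T}).

Lemma card_setI_bigcup_le (B : {set T}) (l : seq I) :
  (#|B :&: \bigcup_(i <- l) A i| <= \sum_(i <- l) #|B :&: A i|)%N.
Proof.
elim: l => [|i l IHl]; first by rewrite !big_nil setI0 cards0.
rewrite !big_cons setIUr (leq_trans (leq_card_setU _ _)) //.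
by rewrite leq_add2l.
Qed.

Lemma sum_card_le_bigcup (s : nat) (l : seq I) : uniq l ->
  {in l &, forall i j, i != j -> #|A i :&: A j| <= s}%N ->
  (\sum_(i <- l) #|A i| <= #|\bigcup_(i <- l) A i| + s * 'C(size l, 2))%N.
Proof.
elim: l => [|i l IHl] /=; first by rewrite !big_nil.
case/andP=> il ul sA.
have {}IHl : (\sum_(j <- l) #|A j| <= #|\bigcup_(j <- l) A j| + s * 'C(size l, 2))%N.
  by apply: IHl => // j j' jl j'l; apply: sA; rewrite inE ?jl ?j'l orbT.
have overlap : (#|A i :&: \bigcup_(j <- l) A j| <= s * size l)%N.
  apply: leq_trans (card_setI_bigcup_le _ _) _.
  rewrite -sum1_size big_distrr !big_seq leq_sum //= => j jl.
  rewrite muln1 sA ?inE ?eqxx ?jl ?orbT //.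
  by apply: contraNneq il => ->.
have := cardsUI (A i) (\bigcup_(j <- l) A j).
rewrite !big_cons binS bin1 mulnDr; lia.
Qed.

End Bonferroni.

Lemma kds_CNF0_card_le1 (V : finType) (C : {set clause V}) (d s : nat) :
  kds_CNF C 0 d s -> (#|C| <= 1)%N.
Proof.
case=> size_C _ _; rewrite -(cards1 (set0 : clause V)) subset_leq_card //.
apply/subsetP=> c cC; rewrite inE; apply/eqP/cards0_eq.
by have [] := size_C c cC.
Qed.

Lemma kds_sum_overlap_le (V : finType) (C : {set clause V}) (k d s : nat)
    (B : {set V}) (l : seq (clause V)) :
  kds_CNF C k d s -> uniq l -> {subset l <= C} ->
  (\sum_(c <- l) #|vbl c :&: B| <= #|B| + s * 'C(size l, 2))%N.
Proof.
case=> _ _ share ul lC.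
apply: leq_trans (sum_card_le_bigcup (A := fun c => vbl c :&: B) ul _) _.
  move=> c1 c2 /lC c1C /lC c2C c12; apply: leq_trans (share _ _ c1C c2C c12).
  by rewrite subset_leq_card // setIACA subsetIl.
rewrite leq_add2r subset_leq_card // bigcup_seq.
by apply/bigcupsP=> c _; apply: subsetIr.
Qed.

Local Open Scope ring_scope.

Lemma kds_threshold_count_le (R : realFieldType) (V : finType)
    (C S : {set clause V}) (k d s n : nat) (B : {set V}) (t : R) :
  kds_CNF C k d s -> S \subset C ->
  {in S, forall c, t <= #|vbl c :&: B|%:R} -> (n <= #|S|)%N ->
  n%:R * t <= #|B|%:R + s%:R * 'C(n, 2)%:R.
Proof.
move=> CNF /subsetP SC t_le n_le.
set l := take n (enum S).
have size_l : size l = n by rewrite size_takel // -cardE.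
have lS : {subset l <= S} by move=> c /mem_take; rewrite mem_enum.
have lC : {subset l <= C} by move=> c /lS /SC.
have := kds_sum_overlap_le B CNF (take_uniq n (enum_uniq S)) lC.
rewrite size_l -(ler_nat R) natrD natrM natr_sum => sum_le.
apply: le_trans sum_le; rewrite -[in leLHS]size_l -sum1_size natr_sum.
rewrite big_distrl /= !big_seq ler_sum // => c cl.
by rewrite mul1r t_le ?lS.
Qed.

Lemma bin2_mul2 (m : nat) : ('C(m.+1, 2) * 2 = m.+1 * m)%N.
Proof. by rewrite bin2 -divn2 divnK // dvdn2 oddM /= andNb. Qed.

Lemma count_bound_lt_threshold (R : realFieldType) (k s m : nat) (p : R) :
  (0 < k)%N -> 0 < p -> m%:R <= p < m.+1%:R ->
  k%:R + s%:R * 'C(m.+1, 2)%:R < m.+1%:R * (k%:R / p + p * s%:R / 2).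
Proof.
move=> k_gt0 p_gt0 /andP[m_le_p p_lt_m1].
have bin2E : 'C(m.+1, 2)%:R = m.+1%:R * m%:R / 2 :> R.
  by rewrite -natrM -bin2_mul2 natrM mulfK ?pnatr_eq0.
have kE : k%:R = k%:R / p * p by rewrite mulfVK ?gt_eqF.
have q_gt0 : 0 < k%:R / p by rewrite divr_gt0 ?ltr0n.
rewrite bin2E {1}kE; set q := k%:R / p.
have gain_gt0 : 0 < q * (m.+1%:R - p) by rewrite mulr_gt0 ?subr_gt0.
have slack_ge0 : 0 <= m.+1%:R * (s%:R * (p - m%:R)).
  by rewrite !mulr_ge0 ?subr_ge0.
lra.
Qed.

Theorem corollary3p9 (R : realFieldType) (V : finType) (C : {set clause V})
    (k d s : nat) (cstar : clause V) (p : R) :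
  kds_CNF C k d s ->
  #|vbl cstar|%N = k ->
  1 <= p ->
  k%:R / p + p * s%:R / 2 <= k%:R ->
  #|[set c in C | k%:R / p + p * s%:R / 2 <= #|vbl c :&: vbl cstar|%:R]|%:R
    <= p.
Proof.
move=> CNF card_cstar p_ge1 _.
set t := _ + _; set S := [set c in C | _].
have SC : S \subset C by apply/subsetP=> c; rewrite inE => /andP[].
have [k0 | k_gt0] := posnP k.
  move: CNF; rewrite k0 => /kds_CNF0_card_le1 C_le1.
  by apply: le_trans p_ge1; rewrite lern1 (leq_trans (subset_leq_card SC)).
rewrite leNgt; apply/negP => p_lt_S.
have p_gt0 : 0 < p := lt_le_trans ltr01 p_ge1.
have ex_n : exists n, [pred n : nat | p < n%:R] n by exists #|S|.
case: (ex_minnP ex_n) => -[|m] /= p_lt_m1 m1_min.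
  by rewrite ltNge ltW in p_lt_m1.
have m_le_p : m%:R <= p by rewrite leNgt; apply/negP => /m1_min; rewrite ltnn.
have t_le : {in S, forall c, t <= #|vbl c :&: vbl cstar|%:R}.
  by move=> c; rewrite inE => /andP[].
have := kds_threshold_count_le CNF SC t_le (m1_min _ p_lt_S).
rewrite card_cstar leNgt => /negP; apply.
by rewrite count_bound_lt_threshold // m_le_p.
Qed.
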